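(* Let $(B,\lfloor\cdot,\cdot\rfloor)$ be an SSD space with quadratic form $q$, let $P\subset B$ be $q$-positive, and suppose $\Phi_P(b)\ge q(b)$ for all $b\in B$. Then $P$ is premaximally $q$-positive and $P^{\pi}=\{b\in B:\Phi_P(b)=q(b)\}$.
   Context: An SSD space is a pair $(B,\lfloor\cdot,\cdot\rfloor)$ with $B$ a nonzero real vector space and $\lfloor\cdot,\cdot\rfloor$ a symmetric bilinear form; $q(b)=\frac12\lfloor b,b\rfloor$. A nonempty $A\subset B$ is $q$-positive if $q(b-c)\ge0$ for all $b,c\in A$; maximally $q$-positive if $q$-positive and not properly contained in another $q$-positive set. $A^{\pi}:=\{b\in B: q(b-a)\ge0\ \forall a\in A\}$. $\Phi_A(x)=\sup_{a\in A}\{\lfloor x,a\rfloor-q(a)\}$ for nonempty $A$. $P$ is premaximally $q$-positive if there is a unique maximally $q$-positive set containing $P$. *)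

From HB Require Import structures.
From mathcomp Require Import all_boot all_order all_algebra.
From mathcomp Require Import all_classical all_reals ereal.
Set Implicit Arguments. Unset Strict Implicit. Unset Printing Implicit Defensive.
Import Order.TTheory GRing.Theory Num.Theory.
Local Open Scope classical_set_scope.
Local Open Scope ring_scope.

Section SSD.
Variables (R : realType) (B : lmodType R) (bf : B -> B -> R).

Definition qf (b : B) : R := bf b b / 2.

Definition qpositive (A : set B) : Prop :=
  A !=set0 /\ forall b c, A b -> A c -> 0 <= qf (b - c).

Definition max_qpositive (A : set B) : Prop :=
  qpositive A /\ forall A' : set B, qpositive A' -> A `<=` A' -> A' = A.

Definition pi_set (A : set B) : set B :=
  [set b | forall a, A a -> 0 <= qf (b - a)].

Definition PhiA (A : set B) (x : B) : \bar R :=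
  ereal_sup [set ((bf x a - qf a)%:E) | a in A].

Definition premax_qpositive (P : set B) : Prop :=
  exists! M : set B, max_qpositive M /\ P `<=` M.
End SSD.

From HB Require Import structures.
From mathcomp Require Import all_boot all_order all_algebra.
From mathcomp Require Import all_classical all_reals ereal.
From mathcomp Require Import ring lra.
Set Implicit Arguments. Unset Strict Implicit. Unset Printing Implicit Defensive.
Import Order.TTheory GRing.Theory Num.Theory.
Local Open Scope classical_set_scope.
Local Open Scope ring_scope.

(* Since q(x - a) = q(x) - ([x,a] - q(a)), the hypothesis Phi_P >= q says
   that inf_{a in P} q(x - a) <= 0 for every x, and membership in P^pi says
   that this infimum is >= 0, i.e. P^pi = {Phi_P <= q}.  For b, c in P^pi and
   a in P close to the midpoint x of b and c, the parallelogram law gives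
   q(b - c) = 2 q(b - a) + 2 q(c - a) - 4 q(x - a) >= -4 q(x - a), which is
   arbitrarily close to a nonnegative number; so P^pi is q-positive.  Any
   q-positive superset of P lies in P^pi, hence P^pi is the unique maximally
   q-positive set containing P. *)

Section SSDSpace.
Variables (R : realType) (B : lmodType R) (bf : B -> B -> R).
Hypothesis bfC : forall x y, bf x y = bf y x.
Hypothesis bf_linear : forall (a : R) (x y z : B), bf (a *: x + y) z = a * bf x z + bf y z.

Local Notation q := (qf bf).

Lemma bfDl x y z : bf (x + y) z = bf x z + bf y z.
Proof. by have := bf_linear 1 x y z; rewrite scale1r mul1r. Qed.

Lemma bf0l z : bf 0 z = 0.
Proof. by have := bfDl 0 0 z; rewrite addr0; lra. Qed.

Lemma bfZl a x z : bf (a *: x) z = a * bf x z.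
Proof. by have := bf_linear a x 0 z; rewrite addr0 bf0l addr0. Qed.

Lemma bfNl x z : bf (- x) z = - bf x z.
Proof. by rewrite -scaleN1r bfZl mulN1r. Qed.

Lemma qfD x y : q (x + y) = q x + bf x y + q y.
Proof. by rewrite /qf !bfDl (bfC x) (bfC y (x + y)) !bfDl (bfC y x); field. Qed.

Lemma qfB x y : q (x - y) = q x - bf x y + q y.
Proof. by rewrite qfD /qf (bfC x) !bfNl (bfC y (- y)) bfNl (bfC y); field. Qed.

Lemma qfZ a x : q (a *: x) = a ^+ 2 * q x.
Proof. by rewrite /qf bfZl bfC bfZl; field. Qed.

Lemma qf_parallelogram x y : q (x + y) + q (x - y) = 2 * q x + 2 * q y.
Proof. by rewrite qfD qfB; ring. Qed.

Lemma pi_setE_PhiA (A : set B) : pi_set bf A = [set b | (PhiA bf A b <= (q b)%:E)%E].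
Proof.
apply/seteqP; split => b /= Hb.
  apply: ge_ereal_sup => _ [a Aa <-]; rewrite lee_fin.
  by have := Hb a Aa; rewrite qfB; lra.
move=> a Aa; have : ((bf b a - q a)%:E <= PhiA bf A b)%E.
  by apply: ereal_sup_ubound; exists a.
by move/le_trans/(_ Hb); rewrite lee_fin qfB; lra.
Qed.

Lemma PhiA_ge_qf_approx (A : set B) x : ((q x)%:E <= PhiA bf A x)%E ->
  forall e, 0 < e -> exists2 a, A a & q (x - a) < e.
Proof.
move=> Hx e e_gt0; have : ((q x - e)%:E < PhiA bf A x)%E.
  by apply: lt_le_trans Hx; rewrite lte_fin gtrDl oppr_lt0.
case/ereal_sup_gt => _ [a Aa <-]; rewrite lte_fin => Ha.
by exists a => //; rewrite qfB; lra.
Qed.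

Lemma qpositive_sub_pi_set (A M : set B) : qpositive bf M -> A `<=` M ->
  M `<=` pi_set bf A.
Proof. by move=> [_ qM] AM b Mb a Aa; apply: qM => //; apply: AM. Qed.

Lemma qpositive_pi_set (A : set B) : qpositive bf A ->
  (forall x, ((q x)%:E <= PhiA bf A x)%E) -> qpositive bf (pi_set bf A).
Proof.
move=> qA HPhi; have AsubAp := qpositive_sub_pi_set qA (@subset_refl _ A).
split; first by case: qA.1 => a Aa; exists a; apply: AsubAp.
move=> b c Hb Hc; apply/ler_addgt0Pl => e e_gt0.
set x := 2^-1 *: (b + c).
have [a Aa Ha] := PhiA_ge_qf_approx (HPhi x) (divr_gt0 e_gt0 (ltr0n _ 4)).
have bE : x - a + 2^-1 *: (b - c) = b - a.
  by rewrite addrAC -scalerDr addrACA subrr addr0 -mulr2n -scaler_nat scalerA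
    mulVf ?pnatr_eq0 // scale1r.
have cE : x - a - 2^-1 *: (b - c) = c - a.
  by rewrite addrAC -scalerBr opprB [_ + (c - b)]addrC addrA subrK -mulr2n
    -scaler_nat scalerA mulVf ?pnatr_eq0 // scale1r.
have q_half : q (2^-1 *: (b - c)) = q (b - c) / 4 by rewrite qfZ; field.
have := qf_parallelogram (x - a) (2^-1 *: (b - c)).
rewrite bE cE q_half; have := Hb a Aa; have := Hc a Aa; lra.
Qed.

Lemma premax_qpositive_pi_set (A : set B) : qpositive bf A ->
  qpositive bf (pi_set bf A) -> premax_qpositive bf A.
Proof.
move=> qA qAp; have AsubAp := qpositive_sub_pi_set qA (@subset_refl _ A).
have maxAp : max_qpositive bf (pi_set bf A).
  split=> // M qM ApM; apply/seteqP; split=> //.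
  exact: qpositive_sub_pi_set qM (subset_trans AsubAp ApM).
exists (pi_set bf A); split=> // M [[qM maxM] AM]; apply: maxM => //.
exact: qpositive_sub_pi_set.
Qed.

End SSDSpace.

Theorem mainTheorem4 (R : realType) (B : lmodType R) (bf : B -> B -> R)
  (hB : exists b : B, b != 0)
  (hsym : forall x y, bf x y = bf y x)
  (hlin : forall (a : R) (x y z : B), bf (a *: x + y) z = a * bf x z + bf y z)
  (P : set B)
  (hP : qpositive bf P)
  (hPhi : forall b : B, ((qf bf b)%:E <= PhiA bf P b)%E) :
  premax_qpositive bf P /\
  pi_set bf P = [set b | PhiA bf P b = (qf bf b)%:E].
Proof.
split.
  exact: premax_qpositive_pi_set hP (qpositive_pi_set hsym hlin hP hPhi).
rewrite (pi_setE_PhiA hsym hlin); apply/seteqP; split => b /=.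
  by move=> Hb; apply/eqP; rewrite eq_le Hb hPhi.
by move->.
Qed.
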